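(* Fix $\alpha\in(0,1)$ and $\delta\ge 0$. For each integer $m$ (large enough that $m'\ge 2$) let $m'=\lfloor\alpha m\rfloor$ and define $h_\delta(i)$ for integers $i\ge m'$ by $h_\delta(m')=1$ and, for $i>m'$, $$h_\delta(i)=\Big(1-\frac2i\Big)h_\delta(i-1)+\frac{\delta}{i}\cdot\frac{m'(m'-1)}{(i-1)(i-2)}\Big[1-\frac{m'}{i-1}\Big].$$ Then $$\liminf_{m\to\infty}\frac1m\sum_{i=m'+1}^{m}h_\delta(i)\ \ge\ \alpha-\alpha^2+\delta\alpha^2\ln\alpha+\frac{\delta}{2}\left(\alpha-\alpha^3\right).$$ *)

From Stdlib Require Import Reals Lra Lia ZArith.
From Coquelicot Require Import Coquelicot.
Open Scope R_scope.

Definition mprime (alpha : R) (m : nat) : nat :=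
  Z.to_nat (Int_part (alpha * INR m)).

(* h_delta(i) for the parameter mp = m'.  h mp i = 1 for i <= mp
   (only the value at i = mp matters: h_delta(m') = 1), and for i > mp
   the recursion of the paper. *)
Fixpoint hdelta (delta : R) (mp : nat) (i : nat) : R :=
  match i with
  | O => 1
  | S j =>
      if (S j <=? mp)%nat then 1
      else
        let ir := INR (S j) in
        let mr := INR mp in
        (1 - 2 / ir) * hdelta delta mp j
        + (delta / ir) * ((mr * (mr - 1)) / ((ir - 1) * (ir - 2)))
          * (1 - mr / (ir - 1))
  end.

Definition avg_h (alpha delta : R) (m : nat) : R :=
  let mp := mprime alpha m in
  / INR m * sum_n_m (fun i => hdelta delta mp i) (S mp) m.

(** The recursion is linear of order one and solves in closed form: with [p = m'],
    [h(p+1+n) = p(p-1)/((p+1+n)(p+n)) * (1 - δ + δ p/(p+n) + δ Σ_{k<n} 1/(p+k))].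
    Summing, the main terms telescope and only a nonnegative error of order
    [p^3/i^4] is lost per step, so the average is bounded below by an explicit
    expression in [m'/m], [1/m] and a harmonic sum.  Bounding the harmonic sum by
    a logarithm gives a lower bound [G δ (m'/m) (1/m)] continuous in both
    arguments, and [m'/m → α] yields the liminf bound. *)

From Stdlib Require Import Reals Lra Lia ZArith.
From Coquelicot Require Import Coquelicot.
Open Scope R_scope.

Lemma hdelta_base d p : hdelta d p p = 1.
Proof. destruct p; simpl; [reflexivity|]. now rewrite Nat.leb_refl. Qed.

Lemma hdelta_succ d p j : (p <= j)%nat ->
  hdelta d p (S j) =
  (1 - 2 / INR (S j)) * hdelta d p j
  + (d / INR (S j)) * ((INR p * (INR p - 1)) / ((INR (S j) - 1) * (INR (S j) - 2)))
    * (1 - INR p / (INR (S j) - 1)).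
Proof.
  intros Hj. cbn [hdelta].
  replace (S j <=? p)%nat with false by (symmetry; apply Nat.leb_gt; lia).
  reflexivity.
Qed.

Fixpoint harmonic_from (p n : nat) : R :=
  match n with
  | O => 0
  | S k => harmonic_from p k + / (INR p + INR k)
  end.

Lemma INR_ge_2 p : (2 <= p)%nat -> 2 <= INR p.
Proof. intros Hp. apply (le_INR 2). exact Hp. Qed.

Section ClosedForm.

Variables (d : R) (p : nat).
Hypothesis Hp : (2 <= p)%nat.

Lemma hdelta_closed_form n :
  hdelta d p (S p + n) =
  INR p * (INR p - 1) / ((INR p + 1 + INR n) * (INR p + INR n))
  * (1 - d + d * INR p / (INR p + INR n) + d * harmonic_from p n).
Proof.
  pose proof (INR_ge_2 p Hp).
  induction n as [|n IHn].
  - rewrite Nat.add_0_r, hdelta_succ, hdelta_base by lia.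
    rewrite S_INR. simpl harmonic_from. change (INR 0) with 0. field. lra.
  - replace (S p + S n)%nat with (S (S p + n)) by lia.
    rewrite hdelta_succ, IHn by lia. simpl harmonic_from.
    rewrite !S_INR, plus_INR, S_INR. pose proof (pos_INR n).
    field. repeat split; lra.
Qed.

(** Lower bound for [Σ_{i=p+1}^{M} h(i)] with [M = p+1+n]; going from [M-1] to [M]
    it increases by [h(M) - δ p^2 (p-1) / (2 M^2 (M-1)^2)]. *)
Definition hsum_lower (n : nat) : R :=
  let M := INR p + 1 + INR n in
  (1 - d) * (INR p - 1) * (1 - INR p / M)
  + d * INR p * (INR p - 1) * (1 / INR p - 1 / (M - 1) - harmonic_from p n / M)
  + d * (INR p - 1) / 2 * (1 - INR p ^ 2 / M ^ 2).

Lemma hsum_lower_le (Hd : 0 <= d) n :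
  hsum_lower n <= sum_n_m (hdelta d p) (S p) (S p + n).
Proof.
  pose proof (INR_ge_2 p Hp) as HP.
  induction n as [|n IHn].
  - rewrite Nat.add_0_r, sum_n_n.
    assert (Herr : 0 <= d * (INR p - 1) / (2 * (INR p + 1) ^ 2)).
    { apply Rmult_le_pos; [nra|]. apply Rlt_le, Rinv_0_lt_compat. nra. }
    assert (Hbase : hsum_lower 0 =
                    hdelta d p (S p) - d * (INR p - 1) / (2 * (INR p + 1) ^ 2)).
    { pose proof (hdelta_closed_form 0) as E. rewrite Nat.add_0_r in E.
      rewrite E. unfold hsum_lower. cbv zeta. change (INR 0) with 0.
      simpl harmonic_from. field. lra. }
    lra.
  - replace (S p + S n)%nat with (S (S p + n)) by lia.
    rewrite sum_n_Sm by lia. change plus with Rplus.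
    replace (S (S p + n)) with (S p + S n)%nat by lia.
    pose proof (pos_INR n).
    set (i := INR p + 1 + (INR n + 1)).
    assert (Hi : 3 < i) by (unfold i; lra).
    assert (Herr : 0 <= d * INR p ^ 2 * (INR p - 1) / (2 * i ^ 2 * (i - 1) ^ 2)).
    { apply Rmult_le_pos; [apply Rmult_le_pos; nra|].
      apply Rlt_le, Rinv_0_lt_compat. apply Rmult_lt_0_compat; nra. }
    assert (Hstep : hsum_lower (S n) = hsum_lower n + hdelta d p (S p + S n)
                    - d * INR p ^ 2 * (INR p - 1) / (2 * i ^ 2 * (i - 1) ^ 2)).
    { rewrite hdelta_closed_form. unfold hsum_lower, i. cbv zeta.
      simpl harmonic_from. rewrite !S_INR. field. repeat split; lra. }
    lra.
Qed.

End ClosedForm.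

Lemma inv_le_ln_ratio x : 1 < x -> / x <= ln (x / (x - 1)).
Proof.
  intros Hx.
  pose proof (exp_ineq1_le (ln ((x - 1) / x))) as E.
  rewrite exp_ln in E by (apply Rdiv_lt_0_compat; lra).
  replace (x / (x - 1)) with (/ ((x - 1) / x)) by (field; lra).
  rewrite ln_Rinv by (apply Rdiv_lt_0_compat; lra).
  replace ((x - 1) / x) with (1 - / x) in * by (field; lra).
  lra.
Qed.

Lemma harmonic_from_le_ln p n : (2 <= p)%nat ->
  harmonic_from p n <= ln ((INR p + INR n - 1) / (INR p - 1)).
Proof.
  intros Hp. pose proof (INR_ge_2 p Hp) as HP.
  induction n as [|n IHn].
  - simpl. change (INR 0) with 0. rewrite Rplus_0_r, Rdiv_diag, ln_1; lra.
  - simpl harmonic_from. rewrite S_INR. pose proof (pos_INR n).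
    replace ((INR p + (INR n + 1) - 1) / (INR p - 1)) with
      ((INR p + INR n - 1) / (INR p - 1) * ((INR p + INR n) / (INR p + INR n - 1)))
      by (field; lra).
    rewrite ln_mult by (apply Rdiv_lt_0_compat; lra).
    pose proof (inv_le_ln_ratio (INR p + INR n) ltac:(lra)). lra.
Qed.

Lemma mprime_bounds alpha m : 0 <= alpha ->
  alpha * INR m - 1 < INR (mprime alpha m) <= alpha * INR m.
Proof.
  intros Ha. unfold mprime.
  pose proof (base_Int_part (alpha * INR m)) as [Hlo Hhi].
  assert (0 <= alpha * INR m) by (pose proof (pos_INR m); nra).
  assert (Hz : (0 <= Int_part (alpha * INR m))%Z).
  { apply le_IZR. assert (Hgt : -1 < IZR (Int_part (alpha * INR m))) by lra.
    apply lt_IZR in Hgt. apply IZR_le. lia. }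
  rewrite (INR_IZR_INZ (Z.to_nat _)), Z2Nat.id by exact Hz. lra.
Qed.

(** [G δ x e] with [x = m'/m], [e = 1/m]; [ln (/ (x - e))] comes from
    bounding [Σ_{k=m'}^{m-2} 1/k] by [ln (m/(m'-1))]. *)
Definition G d x e :=
  (1 - d) * (x - e) * (1 - x) + d * (x - e) * (1 - x / (1 - e))
  - d * x * (x - e) * ln (/ (x - e)) + d / 2 * (x - e) * (1 - x * x).

Lemma G_le_avg_h alpha d m : 0 < alpha < 1 -> 0 <= d -> 3 <= alpha * INR m ->
  G d (INR (mprime alpha m) / INR m) (/ INR m) <= avg_h alpha d m.
Proof.
  intros Ha Hd H3. unfold avg_h.
  pose proof (mprime_bounds alpha m ltac:(lra)) as Hb.
  remember (mprime alpha m) as p eqn:Ep. clear Ep.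
  assert (HM : 0 < INR m) by nra.
  assert (Hp : (2 <= p)%nat).
  { destruct (le_lt_dec 2 p) as [|Hlt]; [assumption|].
    apply lt_INR in Hlt. simpl in Hlt. lra. }
  pose proof (INR_ge_2 p Hp) as HP.
  assert (Hpm : (p < m)%nat) by (apply INR_lt; nra).
  assert (HPm : INR p + 1 <= INR m) by (rewrite <- S_INR; apply le_INR; lia).
  set (n := (m - S p)%nat).
  assert (Hm : (S p + n)%nat = m) by (unfold n; lia).
  assert (HN : INR n = INR m - INR p - 1) by (rewrite <- Hm, plus_INR, S_INR; ring).
  pose proof (hsum_lower_le d p Hp Hd n) as Hsum. rewrite Hm in Hsum.
  set (L := ln (INR m / (INR p - 1))).
  assert (HT : harmonic_from p n <= L).
  { eapply Rle_trans; [apply harmonic_from_le_ln, Hp|].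
    rewrite HN. apply ln_le; [apply Rdiv_lt_0_compat; lra|].
    apply Rmult_le_compat_r; [apply Rlt_le, Rinv_0_lt_compat|]; lra. }
  apply Rle_trans with (/ INR m * hsum_lower d p n).
  2: { apply Rmult_le_compat_l; [apply Rlt_le, Rinv_0_lt_compat; lra | exact Hsum]. }
  assert (Hgap : / INR m * hsum_lower d p n - G d (INR p / INR m) (/ INR m) =
                 d * INR p * (INR p - 1) / INR m ^ 2 * (L - harmonic_from p n)).
  { unfold G, hsum_lower. cbv zeta. rewrite HN.
    replace (/ (INR p / INR m - / INR m)) with (INR m / (INR p - 1)) by (field; lra).
    fold L. field. repeat split; lra. }
  assert (0 <= d * INR p * (INR p - 1) / INR m ^ 2 * (L - harmonic_from p n)).
  { apply Rmult_le_pos; [|lra]. unfold Rdiv.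
    apply Rmult_le_pos; [|apply Rlt_le, Rinv_0_lt_compat; nra].
    apply Rmult_le_pos; [apply Rmult_le_pos|]; lra. }
  lra.
Qed.

Lemma is_lim_seq_inv_INR : is_lim_seq (fun m => / INR m) 0.
Proof.
  replace (Finite 0) with (Rbar_inv p_infty) by reflexivity.
  apply is_lim_seq_inv; [apply is_lim_seq_INR | discriminate].
Qed.

Lemma is_lim_seq_mprime_ratio alpha : 0 <= alpha ->
  is_lim_seq (fun m => INR (mprime alpha m) / INR m) alpha.
Proof.
  intros Ha. apply is_lim_seq_incr_1.
  apply is_lim_seq_le_le with (u := fun m => alpha - / INR (S m)) (w := fun _ => alpha).
  - intros m. pose proof (mprime_bounds alpha (S m) Ha) as Hb.
    assert (HS : 0 < INR (S m)) by (apply lt_0_INR; lia).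
    split; apply Rmult_le_reg_r with (INR (S m)); trivial; unfold Rdiv;
      rewrite ?Rmult_minus_distr_r, !Rmult_assoc, Rinv_l by lra; lra.
  - replace (Finite alpha) with (Finite (alpha - 0)) by (f_equal; ring).
    apply is_lim_seq_minus'; [apply is_lim_seq_const|].
    exact (proj1 (is_lim_seq_incr_1 _ 0) is_lim_seq_inv_INR).
  - apply is_lim_seq_const.
Qed.

Lemma is_lim_seq_G d x e a : 0 < a -> is_lim_seq x a -> is_lim_seq e 0 ->
  is_lim_seq (fun m => G d (x m) (e m)) (G d a 0).
Proof.
  intros Ha Hx He.
  assert (Hxe : is_lim_seq (fun m => x m - e m) (a - 0)) by now apply is_lim_seq_minus'.
  assert (Hln : is_lim_seq (fun m => ln (/ (x m - e m))) (ln (/ (a - 0)))).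
  { apply is_lim_seq_continuous.
    - apply continuity_pt_filterlim, continuous_ln. apply Rinv_0_lt_compat; lra.
    - apply (is_lim_seq_inv _ (a - 0)); [exact Hxe|]. intro Hc. injection Hc. lra. }
  assert (Hq : is_lim_seq (fun m => x m / (1 - e m)) (a / (1 - 0))).
  { apply is_lim_seq_mult'; [exact Hx|].
    apply (is_lim_seq_inv _ (1 - 0)).
    - apply is_lim_seq_minus'; [apply is_lim_seq_const | exact He].
    - intro Hc. injection Hc. lra. }
  unfold G.
  repeat first [ exact Hx | exact He | exact Hln | exact Hq
               | apply is_lim_seq_minus' | apply is_lim_seq_plus'
               | apply is_lim_seq_mult' | apply is_lim_seq_const ].
Qed.

Lemma G_at_0 d a : 0 < a ->
  G d a 0 = a - a ^ 2 + d * a ^ 2 * ln a + d / 2 * (a - a ^ 3).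
Proof.
  intros Ha. unfold G. rewrite Rminus_0_r, Rminus_0_r, ln_Rinv by lra. field.
Qed.

Lemma eventually_ge_3 alpha : 0 < alpha ->
  exists N, forall m, (N <= m)%nat -> 3 <= alpha * INR m.
Proof.
  intros Ha. destruct (archimed (3 / alpha)) as [Hup _].
  assert (Hpos : 0 < 3 / alpha) by (apply Rdiv_lt_0_compat; lra).
  exists (Z.to_nat (up (3 / alpha))). intros m Hm.
  apply le_INR in Hm. rewrite INR_IZR_INZ, Z2Nat.id in Hm by (apply le_IZR; lra).
  apply Rmult_le_reg_l with (/ alpha); [apply Rinv_0_lt_compat; lra|].
  rewrite <- Rmult_assoc, Rinv_l by lra. unfold Rdiv in Hup. lra.
Qed.

Theorem lemma4p8 (alpha delta : R) (Ha : 0 < alpha < 1) (Hd : 0 <= delta) :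
  Rbar_le
    (Finite (alpha - alpha ^ 2 + delta * alpha ^ 2 * ln alpha
             + delta / 2 * (alpha - alpha ^ 3)))
    (LimInf_seq (avg_h alpha delta)).
Proof.
  set (Gm := fun m => G delta (INR (mprime alpha m) / INR m) (/ INR m)).
  assert (HG : is_lim_seq Gm (G delta alpha 0)).
  { apply is_lim_seq_G; [lra | apply is_lim_seq_mprime_ratio; lra
                        | exact is_lim_seq_inv_INR]. }
  rewrite <- G_at_0 by lra.
  rewrite <- (is_LimInf_seq_unique _ _ (is_lim_LimInf_seq _ _ HG)).
  apply LimInf_le.
  destruct (eventually_ge_3 alpha ltac:(lra)) as [N HN].
  exists N. intros m Hm. now apply G_le_avg_h, HN.
Qed.
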